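(* Let $$B_1=\begin{pmatrix}0.1&0\\0&0\end{pmatrix},\qquad B_2=\begin{pmatrix}100&-1000\\ 9.99&-99.9\end{pmatrix},$$ and let $\{I_n\}$ be the stationary Markov chain on $\{1,2\}$ with transition probabilities $p_{12}=p_{21}=0.8$, $p_{11}=p_{22}=0.2$. Let $A_n=B_{I_n}$. Then both $B_1$ and $B_2$ have spectral radius $0.1<1$, yet the top Lyapunov exponent $\lambda=\lim_{n\to\infty}\frac1n\log\|A_n\cdots A_1\|$ of $\{A_n\}$ is strictly positive (it equals $0.2\log 10$). *)

From HB Require Import structures.
From mathcomp Require Import all_boot all_order all_algebra all_field.
From mathcomp Require Import all_classical all_reals all_analysis.
Set Implicit Arguments.
Unset Strict Implicit.
Unset Printing Implicit Defensive.
Import Order.TTheory GRing.Theory Num.Theory.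
Import numFieldNormedType.Exports.
Local Open Scope ring_scope.
Local Open Scope classical_set_scope.

Definition B1 {F : fieldType} : 'M[F]_2 :=
  \matrix_(i < 2, j < 2)
    match nat_of_ord i, nat_of_ord j with
    | 0%N, 0%N => 1 / 10
    | _, _ => 0
    end.

Definition B2 {F : fieldType} : 'M[F]_2 :=
  \matrix_(i < 2, j < 2)
    match nat_of_ord i, nat_of_ord j with
    | 0%N, 0%N => 100
    | 0%N, _ => - 1000
    | _, 0%N => 999 / 100
    | _, _ => - (999 / 10)
    end.

(* State space {1,2} is encoded as 'I_2 : state 1 <-> ord0, state 2 <-> 1. *)
Definition Bst {F : fieldType} (i : 'I_2) : 'M[F]_2 :=
  if i == ord0 then B1 else B2.

Definition is_spectral_radius (n : nat) (A : 'M[algC]_n.+1) (r : algC) : Prop :=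
  (exists2 l, eigenvalue A l & `|l| = r) /\
  (forall l, eigenvalue A l -> `|l| <= r).

Definition trans {R : realType} (i j : 'I_2) : R :=
  if i == j then 1 / 5 else 4 / 5.

(* (I_n)_{n>=0} is a stationary Markov chain with transition matrix trans:
   its stationary law is necessarily uniform (1/2,1/2), so all finite
   dimensional distributions are prescribed. *)
Definition stationary_markov_chain {d : measure_display} {Omega : measurableType d}
  {R : realType} (P : probability Omega R) (I : nat -> Omega -> 'I_2) : Prop :=
  (forall n (i : 'I_2), measurable (I n @^-1` [set i])) /\
  (forall n (s : 'I_n.+1 -> 'I_2),
     P [set w | forall k : 'I_n.+1, I k w = s k] =
     ((1 / 2) * \prod_(k < n) trans (s (inord k)) (s (inord k.+1)))%:E).

Fixpoint Aprod {Omega : Type} {R : realType} (I : nat -> Omega -> 'I_2)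
  (n : nat) (w : Omega) : 'M[R]_2 :=
  match n with
  | 0%N => 1%:M
  | m.+1 => Bst (I m.+1 w) *m Aprod I m w
  end.

From HB Require Import structures.
From mathcomp Require Import all_boot all_order all_algebra all_field.
From mathcomp Require Import all_classical all_reals all_analysis.
From mathcomp Require Import ring lra zify.
Import Order.TTheory GRing.Theory Num.Theory.
Import numFieldNormedType.Exports.
Local Open Scope ring_scope.
Local Open Scope classical_set_scope.

Set Implicit Arguments.
Unset Strict Implicit.
Unset Printing Implicit Defensive.

(* Both matrices have rank one, B_a = u_a v_a with v_a u_a = 1/10, hence spectral
   radius 1/10.  The product A_n ... A_1 collapses to
   (prod_k v_(I_(k+1)) u_(I_k)) u_(I_n) v_(I_1), and v_b u_a is 1/10 if a = b, 1 for
   a switch 1 -> 2 and 10 for a switch 2 -> 1.  Up to a telescoping term this gives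
   log |A_n ... A_1| = ln 10 (3/2 F_n - n) + O(1), where F_n counts the switches.
   Under the chain each step switches with probability 4/5 independently of the
   past, so F_n / n -> 4/5 almost surely (fourth moment bound and Borel-Cantelli),
   and the exponent is ln 10 (6/5 - 1) = ln 10 / 5. *)

Lemma cvg_dist_le_invS (R : realType) (u : nat -> R) (l : R) :
  (forall m, \forall n \near \oo, `|u n - l| <= m.+1%:R^-1) -> u @ \oo --> l.
Proof.
move=> u_near; apply/cvgrPdist_le => e e_gt0.
have le_e : (Num.truncn e^-1).+1%:R^-1 <= e.
  by rewrite -[leRHS]invrK lef_pV2 ?posrE ?invr_gt0 // ltW // truncnS_gt.
by apply: filterS (u_near (Num.truncn e^-1)) => n; rewrite distrC => /le_trans; apply.
Qed.

Lemma cvg_harmonicM_bounded (R : realType) (r : nat -> R) (K : R) :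
  (forall n, `|r n| <= K) -> (fun n => n.+1%:R^-1 * r n) @ \oo --> 0.
Proof.
move=> r_le; apply/cvgr0Pnorm_le => e e_gt0.
have : K * harmonic n @[n --> \oo] --> K * 0 by apply: cvgMl_tmp; exact: cvg_harmonic.
rewrite mulr0 => /cvgr0Pnorm_le/(_ e e_gt0).
apply: filterS => n; apply: le_trans; rewrite !normrM mulrC ler_wpM2r //.
exact: le_trans (r_le n) (ler_norm K).
Qed.

(* Comparison with the telescoping series of [2 c / (k + 1) - 2 c / (k + 2)]. *)
Lemma nneseries_inv_sq_lt_pinfty (R : realType) (c : R) : 0 <= c ->
  (\sum_(k <oo) (c / k.+1%:R ^+ 2)%:E < +oo)%E.
Proof.
move=> c_ge0; apply: (le_lt_trans _ (ltry (2 * c))); apply: lime_le.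
  by apply: is_cvg_nneseries => k _ _; rewrite lee_fin divr_ge0 // exprn_ge0.
apply: nearW => N; rewrite sumEFin lee_fin.
pose f k : R := - (2 * c) / k.+1%:R.
apply: (@le_trans _ _ (\sum_(0 <= k < N) (f k.+1 - f k))).
  apply: ler_sum => k _; rewrite /f -subr_ge0.
  have k2E : k.+2%:R = k.+1%:R + 1 :> R by rewrite -natr1.
  have k0E : k%:R = k.+1%:R - 1 :> R by rewrite -natr1 addrK.
  have -> : - (2 * c) / k.+2%:R - - (2 * c) / k.+1%:R - c / k.+1%:R ^+ 2 =
      c * k%:R / (k.+1%:R ^+ 2 * k.+2%:R).
    have k_ge0 := ler0n R k.
    by rewrite k2E k0E; field; apply/andP; split; apply/eqP; lra.
  by rewrite divr_ge0 ?mulr_ge0.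
rewrite telescope_sumr // /f mulr1n divr1 mulNr opprK addrC lerBlDr lerDl.
by rewrite divr_ge0 ?mulr_ge0.
Qed.

Lemma borel_cantelli_ae d (T : measurableType d) (R : realType)
    (mu : {measure set T -> \bar R}) (A : (set T)^nat) :
  (forall k, measurable (A k)) -> (\sum_(n <oo) mu (A n) < +oo)%E ->
  \forall w \ae mu, \forall n \near \oo, ~ A n w.
Proof.
move=> mA sumA; exists (lim_sup_set A); split.
- by apply: bigcap_measurableType => n _; apply: bigcup_measurable.
- exact: lim_sup_set_cvg0.
- move=> w /= not_ev n _; apply: contrapT => not_A; apply: not_ev.
  by exists n => // j /= le_nj Aj; apply: not_A; exists j.
Qed.

Lemma measure_bigsetU_seq d (T : measurableType d) (R : realType)
    (mu : {measure set T -> \bar R}) (J : choiceType) (F : J -> set T) (r : seq J) (Q : pred J) :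
  uniq r -> (forall j, measurable (F j)) -> (forall i j, i != j -> F i `&` F j = set0) ->
  mu (\big[setU/set0]_(j <- r | Q j) F j) = (\sum_(j <- r | Q j) mu (F j))%E.
Proof.
elim: r => [|i r IH] /=; first by rewrite !big_nil measure0.
move=> /andP[i_notin_r r_uniq] mF disjF; rewrite !big_cons; case: ifP => Qi; last exact: IH.
rewrite measureU //; [by congr (_ + _)%E; apply: IH | by apply: bigsetU_measurable |].
rewrite -bigcup_seq_cond; apply/seteqP; split => [w [Fiw [j /andP[j_in_r _] Fjw]]|] //.
have /disjF/seteqP[+ _] : i != j by apply: contraNneq i_notin_r => ->.
by apply; split.
Qed.

Section RankOne.
Variables (F : fieldType) (n : nat) (u : 'cV[F]_n) (v : 'rV[F]_n).

Lemma mulmx_rank_one (x : 'rV[F]_n) : x *m (u *m v) = (x *m u) 0 0 *: v.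
Proof. by rewrite mulmxA {1}[x *m u]mx11_scalar mul_scalar_mx. Qed.

Lemma eigenvalue_rank_one l : eigenvalue (u *m v) l -> l = 0 \/ l = (v *m u) 0 0.
Proof.
case/eigenvalueP=> x; rewrite mulmx_rank_one => xuv x_neq0.
have [->|l_neq0] := eqVneq l 0; [by left | right].
have xE : x = (l^-1 * (x *m u) 0 0) *: v by rewrite -scalerA xuv scalerA mulVf ?scale1r.
have xu_neq0 : (x *m u) 0 0 != 0.
  by apply: contraNneq x_neq0 => xu0; rewrite xE xu0 mulr0 scale0r.
have xuE : (x *m u) 0 0 = l^-1 * (x *m u) 0 0 * (v *m u) 0 0.
  by rewrite {1}xE -scalemxAl mxE.
have := congr1 (fun y => l * y) xuE.
by rewrite /= !mulrA mulfV // mul1r mulrC => /(mulfI xu_neq0).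
Qed.

Lemma eigenvalue_rank_one_trace : v != 0 -> eigenvalue (u *m v) ((v *m u) 0 0).
Proof. by move=> v_neq0; apply/eigenvalueP; exists v; rewrite ?mulmx_rank_one. Qed.

End RankOne.

Lemma is_spectral_radius_rank_one n (u : 'cV[algC]_n.+1) (v : 'rV[algC]_n.+1) :
  v != 0 -> is_spectral_radius (u *m v) `|(v *m u) 0 0|.
Proof.
move=> v_neq0; split; first by exists ((v *m u) 0 0); rewrite ?eigenvalue_rank_one_trace.
by move=> l /eigenvalue_rank_one [->|->]; rewrite ?normr0.
Qed.

Lemma I2_cases (a : 'I_2) : a = ord0 \/ a = 1.
Proof. by case: a => [[|[|?]] ?] //; [left|right]; apply/val_inj. Qed.

Section Factorization.
Context {F : numFieldType}.

Definition lvec (a : 'I_2) : 'cV[F]_2 := \col_i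
  if a == ord0 then (if i == ord0 then 1 else 0) else (if i == ord0 then 100 else 999 / 100).

Definition rvec (a : 'I_2) : 'rV[F]_2 := \row_j
  if a == ord0 then (if j == ord0 then 1 / 10 else 0) else (if j == ord0 then 1 else - 10).

Definition gain (a b : 'I_2) : F :=
  if a == b then 1 / 10 else if a == ord0 then 1 else 10.

Lemma Bst_rank_one a : Bst a = lvec a *m rvec a.
Proof.
apply/matrixP => i j; rewrite !mxE big_ord1 !mxE.
by case: (I2_cases a) => ->; case: (I2_cases i) => ->; case: (I2_cases j) => ->;
  rewrite /Bst !mxE /=; field.
Qed.

Lemma rvec_lvec a b : rvec b *m lvec a = (gain a b)%:M.
Proof.
apply/matrixP => i j; rewrite !ord1 !mxE !big_ord_recl big_ord0 !mxE /gain /=.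
by case: (I2_cases a) => ->; case: (I2_cases b) => ->; rewrite /=; field.
Qed.

Lemma rvec_neq0 a : rvec a != 0.
Proof.
apply/negP => /eqP/matrixP/(_ 0 ord0); rewrite !mxE /=.
by case: (I2_cases a) => -> /=; apply/eqP; rewrite ?oner_eq0 // mulf_neq0.
Qed.

End Factorization.

Lemma is_spectral_radius_Bst a : is_spectral_radius (@Bst algC a) (1 / 10).
Proof.
have := is_spectral_radius_rank_one (lvec a) (rvec_neq0 a).
by rewrite -Bst_rank_one rvec_lvec mxE eqxx mulr1n /gain eqxx ger0_norm.
Qed.

Lemma Aprod_rank_one (Omega : Type) (R : realType) (I : nat -> Omega -> 'I_2) n w :
  Aprod I n.+1 w =
  (\prod_(k < n) gain (I k.+1 w) (I k.+2 w)) *: (lvec (I n.+1 w) *m rvec (I 1 w)) :> 'M[R]_2.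
Proof.
elim: n => [|n IH]; first by rewrite /= mulmx1 big_ord0 scale1r Bst_rank_one.
rewrite -[Aprod I n.+2 w]/(Bst (I n.+2 w) *m Aprod I n.+1 w) IH Bst_rank_one -scalemxAr.
rewrite !mulmxA -(mulmxA (lvec _)).
by rewrite rvec_lvec mul_mx_scalar -scalemxAl scalerA big_ord_recr /= mulrC.
Qed.

Section LogGrowth.
Variable R : realType.

Definition nflips (x : nat -> 'I_2) n : R := \sum_(k < n) (x k != x k.+1)%:R.

Lemma ln_prod (J : Type) (r : seq J) (P : pred J) (f : J -> R) :
  (forall i, P i -> 0 < f i) -> ln (\prod_(i <- r | P i) f i) = \sum_(i <- r | P i) ln (f i).
Proof.
move=> f_gt0; elim: r => [|i r IH]; first by rewrite !big_nil ln1.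
rewrite !big_cons; case: ifP => // Pi.
by rewrite lnM ?IH // posrE ?f_gt0 // prodr_gt0.
Qed.

Lemma gain_gt0 a b : 0 < gain a b :> R.
Proof. by rewrite /gain; case: ifP => _ //; case: ifP. Qed.

(* The state indicator telescopes along the product, leaving a bounded boundary term. *)
Lemma ln_gain a b : ln (gain a b) =
  ln 10 * (3 / 2 * (a != b)%:R - 1 + ((b == ord0)%:R - (a == ord0)%:R) / 2) :> R.
Proof.
rewrite /gain; case: (I2_cases a) => ->; case: (I2_cases b) => -> /=.
- by rewrite div1r lnV ?posrE //; field.
- by rewrite ln1; field.
- by field.
- by rewrite div1r lnV ?posrE //; field.
Qed.

Lemma ln_norm_Aprod (Omega : Type) (I : nat -> Omega -> 'I_2) n w :
  ln `|Aprod I n.+1 w : 'M[R]_2| =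
  ln 10 * (3 / 2 * nflips (I^~ w \o succn) n - n%:R +
           ((I n.+1 w == ord0)%:R - (I 1 w == ord0)%:R) / 2)
  + ln `|lvec (I n.+1 w) *m rvec (I 1 w) : 'M[R]_2|.
Proof.
have neq0 : lvec (I n.+1 w) *m rvec (I 1 w) != 0 :> 'M[R]_2.
  apply/eqP => /(congr1 (mulmx (rvec (I n.+1 w))))/eqP.
  rewrite mulmx0 mulmxA rvec_lvec mul_scalar_mx scaler_eq0 gt_eqF ?gain_gt0 //=.
  by rewrite (negPf (rvec_neq0 _)).
rewrite Aprod_rank_one normrZ gtr0_norm ?prodr_gt0 // => [|k _]; last exact: gain_gt0.
rewrite lnM ?posrE ?prodr_gt0 ?normr_gt0 // => [|k _]; last exact: gain_gt0.
rewrite ln_prod => [|k _]; last exact: gain_gt0.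
congr (_ + _); under eq_bigr do rewrite ln_gain.
rewrite -mulr_sumr big_split big_split /= -!mulr_suml -mulr_sumr sumr_const card_ord.
rewrite -(big_mkord xpredT (fun k => (I k.+2 w == ord0)%:R - (I k.+1 w == ord0)%:R)).
by rewrite (telescope_sumr (fun k => (I k.+1 w == ord0)%:R)) // mulNrn.
Qed.

Lemma nflipsS (x : nat -> 'I_2) n : nflips x n.+1 = (x 0 != x 1)%:R + nflips (x \o succn) n.
Proof. by rewrite /nflips big_ord_recl. Qed.

Lemma ln_norm_Aprod_nflips : exists K : R, forall (Omega : Type) (I : nat -> Omega -> 'I_2) n w,
  `|ln `|Aprod I n.+1 w| - ln 10 * (3 / 2 * nflips (I^~ w) n.+1 - n.+1%:R)| <= K.
Proof.
pose K0 := \sum_(p : 'I_2 * 'I_2) `|ln `|lvec p.1 *m rvec p.2 : 'M[R]_2| |.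
have K0_ub a b : `|ln `|lvec a *m rvec b : 'M[R]_2| | <= K0.
  by rewrite /K0 (bigD1 (a, b)) //= lerDl sumr_ge0.
have boundary_le (x y z : bool) : `|1 + (x%:R - y%:R) / 2 - 3 / 2 * z%:R| <= 2 :> R.
  by rewrite ler_norml; case: x; case: y; case: z;
    rewrite /= ?mulr1n ?mulr0n; apply/andP; split; lra.
have ln10_gt0 : 0 < ln (10 : R) by rewrite ln_gt0 // ltr1n.
exists (ln 10 * 2 + K0) => Omega I n w.
rewrite ln_norm_Aprod nflipsS -[n.+1%:R]natr1.
set S := nflips _ n; set L := ln `|lvec _ *m rvec _|.
pose X : R :=
  1 + ((I n.+1 w == ord0)%:R - (I 1 w == ord0)%:R) / 2 - 3 / 2 * (I 0 w != I 1 w)%:R.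
have -> : ln 10 * (3 / 2 * S - n%:R + ((I n.+1 w == ord0)%:R - (I 1 w == ord0)%:R) / 2) + L
    - ln 10 * (3 / 2 * ((I 0 w != I 1 w)%:R + S) - (n%:R + 1)) = ln 10 * X + L.
  by rewrite /X; ring.
apply: (le_trans (ler_normD _ _)); apply: lerD; last exact: K0_ub.
by rewrite normrM gtr0_norm // ler_pM2l //; apply: boundary_le.
Qed.

End LogGrowth.
Arguments nflips {R}.

Section WalkLaw.
Context {R : realType}.

(* A walk of length [n] records the [n.+1] states visited at times [0, ..., n]. *)
Definition walk n := {ffun 'I_n.+1 -> 'I_2}.

Definition walk_prob n (s : walk n) : R :=
  1 / 2 * \prod_(k < n) trans (s (inord k)) (s (inord k.+1)).

Definition wexpect n (G : walk n -> R) : R := \sum_s walk_prob s * G s.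
Arguments wexpect : clear implicits.

Definition walk_excess n (s : walk n) : R := nflips (fun k => s (inord k)) n - 4 / 5 * n%:R.

Definition walk_belast n (t : walk n.+1) : walk n := [ffun k : 'I_n.+1 => t (inord k)].

Definition walk_rcons n (s : walk n) (b : 'I_2) : walk n.+1 :=
  [ffun k : 'I_n.+2 => if (k < n.+1)%N then s (inord k) else b].

Lemma walk_rcons_inord n (s : walk n) b k : (k <= n)%N -> walk_rcons s b (inord k) = s (inord k).
Proof. by move=> le_kn; rewrite ffunE inordK ?ltnS ?le_kn //; lia. Qed.

Lemma walk_rcons_last n (s : walk n) b : walk_rcons s b ord_max = b.
Proof. by rewrite ffunE /= ltnn. Qed.

Lemma walk_belast_inord n (t : walk n.+1) k : (k <= n)%N -> walk_belast t (inord k) = t (inord k).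
Proof. by move=> le_kn; rewrite ffunE inordK. Qed.

Lemma walk_rconsK n (b : 'I_2) : cancel (fun s : walk n => walk_rcons s b) (@walk_belast n).
Proof.
move=> s; apply/ffunP => k; rewrite ffunE walk_rcons_inord ?inord_val //.
by rewrite -ltnS.
Qed.

Lemma walk_belastK n (t : walk n.+1) : walk_rcons (walk_belast t) (t ord_max) = t.
Proof.
apply/ffunP => k; rewrite ffunE; have [lt_kn|le_nk] := ltnP k n.+1.
  by rewrite walk_belast_inord ?inord_val // -ltnS.
by congr (t _); apply/val_inj/eqP; rewrite /= eqn_leq le_nk -ltnS ltn_ord.
Qed.

Lemma walk_prob_rcons n (s : walk n) b :
  walk_prob (walk_rcons s b) = walk_prob s * trans (s (inord n)) b.
Proof.
rewrite /walk_prob big_ord_recr /= walk_rcons_inord //.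
rewrite (_ : inord n.+1 = ord_max) ?walk_rcons_last -?mulrA; last first.
  by apply/val_inj; rewrite /= inordK.
do 3 congr (_ * _); apply: eq_bigr => k _.
by rewrite !walk_rcons_inord // ltnW.
Qed.

Lemma wexpect_ext n (F G : walk n -> R) : F =1 G -> wexpect n F = wexpect n G.
Proof. by move=> FG; apply: eq_bigr => s _; rewrite FG. Qed.

Lemma wexpectD n (F G : walk n -> R) :
  wexpect n (fun s => F s + G s) = wexpect n F + wexpect n G.
Proof. by rewrite /wexpect -big_split; apply: eq_bigr => s _; rewrite mulrDr. Qed.

Lemma wexpectZ n c (F : walk n -> R) : wexpect n (fun s => c * F s) = c * wexpect n F.
Proof. by rewrite /wexpect mulr_sumr; apply: eq_bigr => s _; rewrite mulrCA. Qed.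

(* The last step of a walk flips with probability 4/5, whatever its past. *)
Lemma wexpect_step n (H : walk n.+1 -> R) (G : walk n -> R -> R) :
  (forall t, H t = G (walk_belast t) (t (inord n) != t ord_max)%:R) ->
  wexpect n.+1 H = wexpect n (fun s => (G s 0 + 4 * G s 1) / 5).
Proof.
move=> HG; rewrite /wexpect.
rewrite (reindex (fun p : walk n * 'I_2 => walk_rcons p.1 p.2)) /=; last first.
  exists (fun t => (walk_belast t, t ord_max)) => [[s b] _|t _] /=.
    by rewrite walk_rconsK walk_rcons_last.
  exact: walk_belastK.
rewrite -(pair_bigA _ (fun s b => walk_prob (walk_rcons s b) * H (walk_rcons s b))) /=.
apply: eq_bigr => s _; rewrite big_ord_recl big_ord1 !HG !walk_rconsK !walk_prob_rcons.
rewrite !walk_rcons_last !walk_rcons_inord // /trans.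
by case: (I2_cases (s (inord n))) => ->; rewrite /=; field.
Qed.

Lemma wexpect_cst n c : wexpect n (fun => c) = c.
Proof.
suff mass1 : wexpect n (fun => 1) = 1.
  transitivity (c * wexpect n (fun => 1)); last by rewrite mass1 mulr1.
  by rewrite -wexpectZ; apply: wexpect_ext => s; rewrite mulr1.
elim: n => [|n IH].
  rewrite /wexpect /walk_prob (eq_bigr (fun => 1 / 2)) => [|s _]; last by rewrite big_ord0 !mulr1.
  by rewrite sumr_const card_ffun !card_ord; field.
by rewrite (@wexpect_step _ _ (fun _ _ => 1)) //; rewrite -[RHS]IH; apply: wexpect_ext => s; field.
Qed.

Lemma walk_excess0 (s : walk 0) : walk_excess s = 0.
Proof. by rewrite /walk_excess /nflips big_ord0 mulr0 subr0. Qed.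

Lemma walk_excess_belast n (t : walk n.+1) :
  walk_excess t = walk_excess (walk_belast t) + ((t (inord n) != t ord_max)%:R - 4 / 5).
Proof.
rewrite /walk_excess /nflips big_ord_recr /= -[n.+1%:R]natr1.
rewrite (_ : inord n.+1 = ord_max); last by apply/val_inj; rewrite /= inordK.
rewrite (eq_bigr (fun k : 'I_n => (walk_belast t (inord k) != walk_belast t (inord k.+1))%:R)).
  by ring.
by move=> k _; rewrite !walk_belast_inord // ltnW.
Qed.

Lemma wexpect_excess n : wexpect n (@walk_excess n) = 0.
Proof.
elim: n => [|n IH]; first by apply: big1 => s _; rewrite walk_excess0 mulr0.
rewrite (@wexpect_step _ _ (fun s x => walk_excess s + (x - 4 / 5))) => [|t]; last first.
  exact: walk_excess_belast.
by rewrite -[RHS]IH; apply: wexpect_ext => s; field.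
Qed.

Lemma wexpect_excess2 n : wexpect n (fun s => walk_excess s ^+ 2) = 4 / 25 * n%:R.
Proof.
elim: n => [|n IH]; first by rewrite mulr0; apply: big1 => s _; rewrite walk_excess0 expr0n mulr0.
rewrite (@wexpect_step _ _ (fun s x => (walk_excess s + (x - 4 / 5)) ^+ 2)) => [|t]; last first.
  by rewrite walk_excess_belast.
rewrite (@wexpect_ext _ _ (fun s => walk_excess s ^+ 2 + 4 / 25)) => [|s]; last by field.
by rewrite wexpectD wexpect_cst IH -natr1; ring.
Qed.

(* The centred flip indicator has moments 0, 4/25, -12/125 and 52/625. *)
Lemma wexpect_excess4_le n : wexpect n (fun s => walk_excess s ^+ 4) <= n%:R ^+ 2.
Proof.
elim: n => [|n IH].
  by rewrite /wexpect big1 ?exprn_ge0 // => s _; rewrite walk_excess0 expr0n mulr0.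
rewrite (@wexpect_step _ _ (fun s x => (walk_excess s + (x - 4 / 5)) ^+ 4)) => [|t]; last first.
  by rewrite walk_excess_belast.
rewrite (@wexpect_ext _ _ (fun s => walk_excess s ^+ 4 +
    (24 / 25 * walk_excess s ^+ 2 + (- (48 / 125) * walk_excess s + 52 / 625)))) => [|s];
  last by field.
rewrite !wexpectD !wexpectZ wexpect_cst wexpect_excess2 wexpect_excess -natr1.
have n_ge0 : 0 <= n%:R :> R by [].
nra.
Qed.

Lemma walk_prob_ge0 n (s : walk n) : 0 <= walk_prob s.
Proof. by rewrite mulr_ge0 // prodr_ge0 // => k _; rewrite /trans; case: ifP. Qed.

(* Markov's inequality for the fourth moment. *)
Lemma walk_excess_tail n (x : R) : 0 < x ->
  \sum_(s : walk n | x < `|walk_excess s|) walk_prob s <= n%:R ^+ 2 / x ^+ 4.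
Proof.
move=> x_gt0; apply: (le_trans _ (ler_wpM2r _ (wexpect_excess4_le n))); last first.
  by rewrite invr_ge0 exprn_ge0 // ltW.
rewrite /wexpect mulr_suml [leRHS](bigID (fun s => x < `|walk_excess s|)) /= -[leLHS]addr0.
apply: lerD; last first.
  apply: sumr_ge0 => s _.
  by rewrite divr_ge0 ?exprn_even_ge0 // mulr_ge0 ?walk_prob_ge0 ?exprn_even_ge0.
apply: ler_sum => s lt_xs; rewrite -mulrA ler_peMr ?walk_prob_ge0 //.
have -> : walk_excess s ^+ 4 = `|walk_excess s| ^+ 4 by rewrite -normrX ger0_norm ?exprn_even_ge0.
rewrite ler_pdivlMr ?exprn_gt0 // mul1r.
by apply: lerXn2r; rewrite ?nnegrE ?normr_ge0 //; apply: ltW.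
Qed.

End WalkLaw.

Definition walk_of (Omega : Type) (I : nat -> Omega -> 'I_2) n w : walk n :=
  [ffun k : 'I_n.+1 => I k w].

Lemma walk_excess_of (Omega : Type) (R : realType) (I : nat -> Omega -> 'I_2) n w :
  walk_excess (walk_of I n w) = nflips (I^~ w) n - 4 / 5 * n%:R :> R.
Proof.
congr (_ - _); apply: eq_bigr => k _.
by rewrite !ffunE !inordK // ltnS ?ltn_ord // ltnW.
Qed.

Lemma walk_of_eqE (Omega : Type) (I : nat -> Omega -> 'I_2) n (s : walk n) :
  [set w | walk_of I n w = s] = [set w | forall k : 'I_n.+1, I k w = s k].
Proof.
apply/seteqP; split => w /=; first by move=> <- k; rewrite ffunE.
by move=> Iw; apply/ffunP => k; rewrite ffunE.
Qed.

Section MarkovChain.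
Context d (Omega : measurableType d) (R : realType) (P : probability Omega R).
Variable I : nat -> Omega -> 'I_2.
Hypothesis chainI : stationary_markov_chain P I.

Lemma walk_of_event n (Q : pred (walk n)) : [set w | Q (walk_of I n w)] =
  \big[setU/set0]_(s <- index_enum (walk n) | Q s) [set w | walk_of I n w = s].
Proof.
rewrite -bigcup_seq_cond; apply/seteqP; split => [w Qw|w [s /andP[_ Qs]]].
  by exists (walk_of I n w); rewrite /= ?mem_index_enum.
by rewrite /= => ->.
Qed.

Lemma measurable_walk_of_eq n (s : walk n) : measurable [set w | walk_of I n w = s].
Proof.
have -> : [set w | walk_of I n w = s] =
    \bigcap_(k in [set k | (k < n.+1)%N]) I k @^-1` [set s (inord k)].
  apply/seteqP; split => [w /= <- k /= lt_kn|w /= Iw].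
    by rewrite /preimage /= ffunE inordK.
  by apply/ffunP => k; rewrite ffunE (Iw k (ltn_ord k)) inord_val.
by apply: bigcap_measurableType => k _; apply: chainI.1.
Qed.

Lemma measurable_walk_of n (Q : pred (walk n)) : measurable [set w | Q (walk_of I n w)].
Proof.
by rewrite walk_of_event; apply: bigsetU_measurable => s _; apply: measurable_walk_of_eq.
Qed.

Lemma prob_walk_of n (Q : pred (walk n)) :
  P [set w | Q (walk_of I n w)] = (\sum_(s | Q s) walk_prob s)%:E.
Proof.
rewrite walk_of_event measure_bigsetU_seq ?index_enum_uniq //.
- by rewrite -sumEFin; apply: eq_bigr => s _; rewrite walk_of_eqE; apply: chainI.2.
- exact: measurable_walk_of_eq.
- move=> s t; apply: contra_neqP => /eqP/set0P[w [<- <-]] //.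
Qed.

Lemma walk_excess_small_ae m : \forall w \ae P, \forall n \near \oo,
  `|walk_excess (walk_of I n.+1 w)| <= n.+1%:R / m.+1%:R :> R.
Proof.
pose A n := [set w | n.+1%:R / m.+1%:R < `|walk_excess (walk_of I n.+1 w)| :> R].
have mA n : measurable (A n).
  exact: (measurable_walk_of (fun s => n.+1%:R / m.+1%:R < `|walk_excess s| :> R)).
have PA_le n : (P (A n) <= (m.+1%:R ^+ 4 / n.+1%:R ^+ 2)%:E)%E.
  rewrite (prob_walk_of (fun s => n.+1%:R / m.+1%:R < `|walk_excess s| :> R)) lee_fin.
  apply: le_trans (walk_excess_tail _ _) _; first by rewrite divr_gt0.
  suff -> : n.+1%:R ^+ 2 / (n.+1%:R / m.+1%:R) ^+ 4 = m.+1%:R ^+ 4 / n.+1%:R ^+ 2 :> R by [].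
  by field; rewrite !nat1r !pnatr_eq0.
have sumA : (\sum_(n <oo) P (A n) < +oo)%E.
  apply: le_lt_trans (nneseries_inv_sq_lt_pinfty (exprn_ge0 _ (ler0n _ m.+1))).
  by apply: lee_nneseries => n _ //; apply: measure_ge0.
apply: filterS (borel_cantelli_ae mA sumA) => w; apply: filterS => n.
by rewrite /A /= leNgt => /negP.
Qed.

Lemma nflips_slln :
  {ae P, forall w, (fun n => n%:R^-1 * nflips (I^~ w) n) @ \oo --> (4 / 5 : R)}.
Proof.
apply: filterS (ae_foralln walk_excess_small_ae) => w excess_small.
rewrite -cvg_shiftS /=; apply: cvg_dist_le_invS => m.
apply: filterS (excess_small m) => n; rewrite walk_excess_of.
have -> : n.+1%:R^-1 * nflips (I^~ w) n.+1 - 4 / 5 =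
    n.+1%:R^-1 * (nflips (I^~ w) n.+1 - 4 / 5 * n.+1%:R) :> R by field.
by rewrite normrM gtr0_norm ?invr_gt0 // ler_pdivrMl.
Qed.

End MarkovChain.

Lemma cvg_ln_norm_Aprod (Omega : Type) (R : realType) (I : nat -> Omega -> 'I_2) w :
  (fun n => n%:R^-1 * nflips (I^~ w) n) @ \oo --> (4 / 5 : R) ->
  (fun n => n%:R^-1 * ln `|@Aprod Omega R I n w|) @ \oo --> 1 / 5 * ln (10 : R).
Proof.
have [K ln_Aprod_le] := @ln_norm_Aprod_nflips R.
rewrite -cvg_shiftS /= => flips_cvg; rewrite -cvg_shiftS /=.
pose r n : R :=
  ln `|Aprod I n.+1 w : 'M[R]_2| - ln 10 * (3 / 2 * nflips (I^~ w) n.+1 - n.+1%:R).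
have -> : (fun n => n.+1%:R^-1 * ln `|Aprod I n.+1 w|) = (fun n =>
    ln 10 * (3 / 2 * (n.+1%:R^-1 * nflips (I^~ w) n.+1) - 1) + n.+1%:R^-1 * r n).
  by apply/funext => n; rewrite /r; field; rewrite nat1r pnatr_eq0.
have -> : 1 / 5 * ln (10 : R) = ln 10 * (3 / 2 * (4 / 5) - 1) + 0 by field.
apply: cvgD; last exact: (cvg_harmonicM_bounded (fun n => ln_Aprod_le _ I n w)).
by apply: cvgMl_tmp; apply: cvgB; [apply: cvgMl_tmp | apply: cvg_cst].
Qed.

Theorem mainTheorem7 (d : measure_display) (Omega : measurableType d)
  (R : realType) (P : probability Omega R) (I : nat -> Omega -> 'I_2) :
  stationary_markov_chain P I ->
  [/\ is_spectral_radius (@B1 algC) (1 / 10),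
      is_spectral_radius (@B2 algC) (1 / 10),
      (1 / 10 : algC) < 1,
      (0 : R) < (1 / 5) * ln 10 &
      {ae P, forall w,
         (fun n : nat => (n%:R)^-1 * ln `|@Aprod Omega R I n w|) @ \oo
           --> (1 / 5) * ln (10 : R)}].
Proof.
move=> chainI; split.
- exact: (is_spectral_radius_Bst ord0).
- exact: (is_spectral_radius_Bst 1).
- by rewrite mul1r invf_lt1 // ltr1n.
- by rewrite mulr_gt0 // ln_gt0 // ltr1n.
- by apply: filterS (nflips_slln chainI) => w; apply: cvg_ln_norm_Aprod.
Qed.
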